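(* Let $X$ be a set, let $\mathcal{L}$ be a nest on $X$, and let $Y\subseteq X$. Then $X={\uparrow}Y$ if and only if there exists a subfamily $\mathcal{L}'=\{L_i : i\in I\}\subseteq\mathcal{L}$ with $\bigcap_{i\in I}L_i=\emptyset$ such that $Y\cap L_i\neq\emptyset$ for every $i\in I$.
   Context: A nest on $X$ is a family of subsets of $X$ totally ordered by inclusion. Define $x\triangleleft_{\mathcal{L}} y$ iff there exists $L\in\mathcal{L}$ with $x\in L$ and $y\notin L$. For $Y\subseteq X$, ${\uparrow}Y=\{x\in X : \exists y\in Y,\ y\triangleleft_{\mathcal{L}} x\}$. *)

From mathcomp Require Import all_boot.
From mathcomp Require Import classical_sets.
Set Implicit Arguments. Unset Strict Implicit. Unset Printing Implicit Defensive.
Local Open Scope classical_set_scope.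

Definition nest (X : Type) (L : set (set X)) : Prop :=
  forall A B, L A -> L B -> A `<=` B \/ B `<=` A.

Definition nest_rel (X : Type) (L : set (set X)) (x y : X) : Prop :=
  exists2 A, L A & A x /\ ~ A y.

Definition nest_up (X : Type) (L : set (set X)) (Y : set X) : set X :=
  [set x | exists2 y, Y y & nest_rel L y x].

From mathcomp Require Import all_boot.
From mathcomp Require Import boolp classical_sets.
Set Implicit Arguments.
Local Open Scope classical_set_scope.

(* A point lies in [up Y] exactly when some member of the nest meeting [Y]
   misses it, so [up Y] is the complement of the intersection of all members
   meeting [Y].  Every subfamily of such members has a larger intersection,
   which gives both directions. *)

Lemma subset_bigcapl (I T : Type) (P Q : set I) (F : I -> set T) :
  P `<=` Q -> \bigcap_(i in Q) F i `<=` \bigcap_(i in P) F i.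
Proof. by move=> PQ; apply: sub_bigcap => i /PQ; apply: bigcap_inf. Qed.

Definition meeting_members (X : Type) (L : set (set X)) (Y : set X) :
  set (set X) := [set A | L A /\ Y `&` A !=set0].

Lemma nest_upE (X : Type) (L : set (set X)) (Y : set X) :
  nest_up L Y = ~` \bigcap_(A in meeting_members L Y) A.
Proof.
apply/seteqP; split=> x.
  by case=> y Yy [A LA [Ay nAx]] /(_ A) Ax; apply/nAx/Ax; split => //; exists y.
move=> /existsNP[A /not_implyP[[LA [y [Yy Ay]]] nAx]].
by exists y => //; exists A.
Qed.

Theorem proposition4p3 (X : Type) (L : set (set X)) (Y : set X) :
  nest L ->
  (nest_up L Y = setT <->
   exists2 L' : set (set X), L' `<=` L &
     \bigcap_(A in L') A = set0 /\ (forall A, L' A -> Y `&` A !=set0)).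
Proof.
move=> _; rewrite nest_upE; split.
  move=> /(congr1 setC); rewrite setCK setCT => capE.
  by exists (meeting_members L Y) => [A []|]; last by split=> // A [].
case=> L' sL [capE meetY].
have sL'm : L' `<=` meeting_members L Y by move=> A L'A; split; auto.
by apply/setC_inj; rewrite setCK setCT -subset0 -capE; apply: subset_bigcapl.
Qed.
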